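(* Consider a single element with nodes $1,\dots,N$ and SBP operators in $d$ directions: matrices $D^j\in\mathbb{R}^{N\times N}$ with $D^j\mathbf{1}=0$, a diagonal positive mass matrix $M$, and diagonal matrices $E^j=\operatorname{diag}(e^j_1,\dots,e^j_N)$ (the boundary operators $R^TBN^jR$) such that $MD^j+(D^j)^TM=E^j$ for $j=1,\dots,d$. Let $Y\subset\mathbb{R}^n$, $\omega\colon Y\to\mathbb{R}^n$, and for each $j$ let $f^j\colon Y\to\mathbb{R}^n$, $F^j\colon Y\to\mathbb{R}$, $H^j\colon Y\to\mathbb{R}^{n\times m}$, $g^j\colon Y\to\mathbb{R}^m$, $\psi^j=\omega\cdot f^j-F^j$; let $\alpha\in\mathbb{R}$. Let volume fluxes $f^{\mathrm{vol},j}$, $H^{\mathrm{vol},j}$ be symmetric and consistent with $f^j,H^j$, and surface fluxes $f^{\mathrm{num},j}$, $H^{\mathrm{num},j}$ be consistent with $f^j,H^j$, and assume both pairs satisfy, for all $u_-,u_+\in Y$ and all $j$, $$[\![\omega]\!]\cdot f^{\cdot,j}-\alpha\{\{\omega\}\}\cdot H^{\cdot,j}[\![g^j]\!]-(1-\alpha)\{\{\omega\cdot H^j\}\}[\![g^j]\!]=[\![\psi^j]\!].$$ Given nodal states $u_1,\dots,u_N\in Y$ and, for each node $k$ and direction $j$, an exterior state $u^+_{k,j}\in Y$, define $$\mathrm{VOL}_i=\sum_{j=1}^d\sum_{k=1}^N\Big(2D^j_{i,k}f^{\mathrm{vol},j}(u_i,u_k)+\alpha D^j_{i,k}H^{\mathrm{vol},j}(u_i,u_k)\big(g^j(u_k)-g^j(u_i)\big)+(1-\alpha)D^j_{i,k}H^j(u_i)\big(g^j(u_k)-g^j(u_i)\big)\Big),$$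 $$\mathrm{SURF}_i=M_{ii}^{-1}\sum_{j=1}^de^j_i\Big(f^{\mathrm{num},j}(u_i,u^+_{i,j})-f^j(u_i)+\tfrac\alpha2H^{\mathrm{num},j}(u_i,u^+_{i,j})\big(g^j(u^+_{i,j})-g^j(u_i)\big)+\tfrac{1-\alpha}2H^j(u_i)\big(g^j(u^+_{i,j})-g^j(u_i)\big)\Big),$$ and $\partial_tu_i=-\mathrm{VOL}_i-\mathrm{SURF}_i$. Then $$\sum_{i=1}^NM_{ii}\,\omega(u_i)\cdot\partial_tu_i=-\sum_{k=1}^N\sum_{j=1}^de^j_k\,F^{\mathrm{num},j}(u_k,u^+_{k,j}),$$ where $F^{\mathrm{num},j}=\{\{F^j\}\}+\{\{\omega\}\}\cdot f^{\mathrm{num},j}-\{\{\omega\cdot f^j\}\}-\tfrac\alpha4[\![\omega]\!]\cdot H^{\mathrm{num},j}[\![g^j]\!]-\tfrac{1-\alpha}4[\![\omega\cdot H^j]\!][\![g^j]\!]$, which is consistent: $F^{\mathrm{num},j}(u,u)=F^j(u)$.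
   Context: For a function $a$ on $Y$ and a pair of states $(u_-,u_+)$: $\{\{a\}\}=\tfrac12(a(u_-)+a(u_+))$, $[\![a]\!]=a(u_+)-a(u_-)$; two-point fluxes are evaluated at $(u_-,u_+)$; $\omega\cdot H^j=\omega^TH^j$. In applications $\omega=U'$ for an entropy $U$ with entropy fluxes $F^j$, $e^j_k$ is the boundary quadrature weight at node $k$ times the $j$-th component of the outward normal (zero at interior nodes), and $u^+_{k,j}$ is the neighboring element's trace; the identity expresses that the element entropy changes only by interface numerical entropy fluxes (entropy conservation). *)

From mathcomp Require Import all_boot all_order all_algebra.
Set Implicit Arguments. Unset Strict Implicit. Unset Printing Implicit Defensive.
Import Order.TTheory GRing.Theory Num.Theory.
Local Open Scope ring_scope.

Definition dot (R : realFieldType) (k : nat) (a b : 'cV[R]_k) : R := (a^T *m b) 0 0.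

Definition avg (R : realFieldType) (V : lmodType R) (T : Type) (a : T -> V) (um up : T) : V :=
  2^-1 *: (a um + a up).
Definition jump (V : zmodType) (T : Type) (a : T -> V) (um up : T) : V := a up - a um.

Definition psi (R : realFieldType) (n : nat) (omega f : 'cV[R]_n -> 'cV[R]_n)
  (F : 'cV[R]_n -> R) (u : 'cV[R]_n) : R := dot (omega u) (f u) - F u.

Definition flux_condition (R : realFieldType) (n m : nat) (Y : 'cV[R]_n -> Prop)
  (omega f : 'cV[R]_n -> 'cV[R]_n) (F : 'cV[R]_n -> R)
  (H : 'cV[R]_n -> 'M[R]_(n, m)) (g : 'cV[R]_n -> 'cV[R]_m) (alpha : R)
  (fl : 'cV[R]_n -> 'cV[R]_n -> 'cV[R]_n) (Hl : 'cV[R]_n -> 'cV[R]_n -> 'M[R]_(n, m)) :=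
  forall um up, Y um -> Y up ->
    dot (jump omega um up) (fl um up)
    - alpha * dot (avg omega um up) (Hl um up *m jump g um up)
    - (1 - alpha) * ((avg (fun w => (omega w)^T *m H w) um up) *m jump g um up) 0 0
    = jump (psi omega f F) um up.

Definition VOL (R : realFieldType) (n m N d : nat) (D : 'I_d -> 'M[R]_N) (alpha : R)
  (H : 'I_d -> 'cV[R]_n -> 'M[R]_(n, m)) (g : 'I_d -> 'cV[R]_n -> 'cV[R]_m)
  (fvol : 'I_d -> 'cV[R]_n -> 'cV[R]_n -> 'cV[R]_n)
  (Hvol : 'I_d -> 'cV[R]_n -> 'cV[R]_n -> 'M[R]_(n, m))
  (u : 'I_N -> 'cV[R]_n) (i : 'I_N) : 'cV[R]_n :=
  \sum_(j < d) \sum_(k < N)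
    ((2 * D j i k) *: fvol j (u i) (u k)
     + (alpha * D j i k) *: (Hvol j (u i) (u k) *m (g j (u k) - g j (u i)))
     + ((1 - alpha) * D j i k) *: (H j (u i) *m (g j (u k) - g j (u i)))).

(* Surface term SURF_i; e j i is the i-th diagonal entry of E^j *)
Definition SURF (R : realFieldType) (n m N d : nat) (M : 'M[R]_N) (e : 'I_d -> 'I_N -> R)
  (alpha : R) (f : 'I_d -> 'cV[R]_n -> 'cV[R]_n)
  (H : 'I_d -> 'cV[R]_n -> 'M[R]_(n, m)) (g : 'I_d -> 'cV[R]_n -> 'cV[R]_m)
  (fnum : 'I_d -> 'cV[R]_n -> 'cV[R]_n -> 'cV[R]_n)
  (Hnum : 'I_d -> 'cV[R]_n -> 'cV[R]_n -> 'M[R]_(n, m))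
  (u : 'I_N -> 'cV[R]_n) (uplus : 'I_N -> 'I_d -> 'cV[R]_n) (i : 'I_N) : 'cV[R]_n :=
  (M i i)^-1 *: \sum_(j < d) e j i *:
    (fnum j (u i) (uplus i j) - f j (u i)
     + (alpha / 2) *: (Hnum j (u i) (uplus i j) *m (g j (uplus i j) - g j (u i)))
     + ((1 - alpha) / 2) *: (H j (u i) *m (g j (uplus i j) - g j (u i)))).

Definition Fnum (R : realFieldType) (n m : nat) (omega f : 'cV[R]_n -> 'cV[R]_n)
  (F : 'cV[R]_n -> R) (H : 'cV[R]_n -> 'M[R]_(n, m)) (g : 'cV[R]_n -> 'cV[R]_m)
  (alpha : R) (fnum : 'cV[R]_n -> 'cV[R]_n -> 'cV[R]_n)
  (Hnum : 'cV[R]_n -> 'cV[R]_n -> 'M[R]_(n, m)) (um up : 'cV[R]_n) : R :=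
  2^-1 * (F um + F up) + dot (avg omega um up) (fnum um up)
  - 2^-1 * (dot (omega um) (f um) + dot (omega up) (f up))
  - alpha / 4 * dot (jump omega um up) (Hnum um up *m jump g um up)
  - (1 - alpha) / 4 * ((jump (fun w => (omega w)^T *m H w) um up) *m jump g um up) 0 0.

From mathcomp Require Import all_boot all_order all_algebra ring lra.
Import Order.TTheory GRing.Theory Num.Theory.
Local Open Scope ring_scope.
Set Implicit Arguments. Unset Strict Implicit. Unset Printing Implicit Defensive.

(* Contracting the semi-discrete equation with [M omega] splits the entropy
   rate into a volume and a surface part.  In the volume part, the SBP property
   [M D + D^T M = E] together with [D 1 = 0] reduces the double sum
   [sum_i sum_k M_ii D_ik a(u_i, u_k)] to half the boundary diagonal terms plus
   the antisymmetric part of [a]; for a symmetric volume flux the entropy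
   condition makes that antisymmetric part the difference [2 (psi u_i - psi u_k)],
   and by consistency the whole volume part collapses to [sum_k e_k F(u_k)].
   In the surface part, the entropy condition on the surface flux rewrites
   [omega(u_i) . (surface integrand)] as [F^num - F], so the [F] terms cancel. *)

Section Dot.
Variables (R : realFieldType) (n : nat).
Implicit Types a b c : 'cV[R]_n.

Lemma dotDr a b c : dot a (b + c) = dot a b + dot a c.
Proof. by rewrite /dot mulmxDr mxE. Qed.

Lemma dotDl a b c : dot (b + c) a = dot b a + dot c a.
Proof. by rewrite /dot linearD /= mulmxDl mxE. Qed.

Lemma dotZr x a b : dot a (x *: b) = x * dot a b.
Proof. by rewrite /dot -scalemxAr mxE. Qed.

Lemma dotZl x a b : dot (x *: b) a = x * dot b a.
Proof. by rewrite /dot linearZ /= -scalemxAl mxE. Qed.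

Lemma dotNr a b : dot a (- b) = - dot a b.
Proof. by rewrite -scaleN1r dotZr mulN1r. Qed.

Lemma dotNl a b : dot (- b) a = - dot b a.
Proof. by rewrite -scaleN1r dotZl mulN1r. Qed.

Lemma dotBr a b c : dot a (b - c) = dot a b - dot a c.
Proof. by rewrite dotDr dotNr. Qed.

Lemma dot0r a : dot a 0 = 0.
Proof. by rewrite /dot mulmx0 mxE. Qed.

Lemma dot_sumr I (r : seq I) (P : pred I) a (G : I -> 'cV[R]_n) :
  dot a (\sum_(i <- r | P i) G i) = \sum_(i <- r | P i) dot a (G i).
Proof. exact: (big_morph _ (dotDr a) (dot0r a)). Qed.

Lemma dot_mulmx m a (A : 'M[R]_(n, m)) (v : 'cV[R]_m) :
  dot a (A *m v) = (a^T *m A *m v) 0 0.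
Proof. by rewrite /dot mulmxA. Qed.

End Dot.

Section SBPSums.
Variables (R : numFieldType) (N : nat).
Variables (Q : 'I_N -> 'I_N -> R) (e : 'I_N -> R).
Hypothesis Q_skew : forall i k, Q i k + Q k i = e i *+ (i == k).

Lemma sum_mulrn_eq (G : 'I_N -> R) k : \sum_i G i *+ (i == k) = G k.
Proof. by rewrite (bigD1 k) //= eqxx big1 ?addr0 // => i /negPf ->. Qed.

Lemma sum_skew_symmetrize (a : 'I_N -> 'I_N -> R) :
  \sum_i \sum_k Q i k * a i k
  = 2^-1 * (\sum_i e i * a i i + \sum_i \sum_k Q i k * (a i k - a k i)).
Proof.
set S := LHS.
have S_swap : S = \sum_i e i * a i i - \sum_i \sum_k Q i k * a k i.
  rewrite /S exchange_big /=.
  have Q_swap k i : Q i k = e k *+ (k == i) - Q k i by rewrite -Q_skew addrC addKr.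
  under eq_bigr => k _ do under eq_bigr => i _ do
    rewrite Q_swap mulrBl mulrnAl eq_sym.
  by rewrite -sumrB; apply: eq_bigr => k _; rewrite sumrB sum_mulrn_eq.
have -> : \sum_i \sum_k Q i k * (a i k - a k i)
          = S - \sum_i \sum_k Q i k * a k i.
  by rewrite -sumrB; apply: eq_bigr => i _; rewrite -sumrB;
     apply: eq_bigr => k _; rewrite mulrBr.
by rewrite S_swap; field.
Qed.

Hypothesis Q_row0 : forall i, \sum_k Q i k = 0.

Lemma sum_col_skew k : \sum_i Q i k = e k.
Proof.
have Q_swap i : Q i k = e i *+ (i == k) - Q k i by rewrite -Q_skew addrK.
by rewrite (eq_bigr _ (fun i _ => Q_swap i)) sumrB sum_mulrn_eq Q_row0 subr0.
Qed.

Lemma sbp_sum_potential (a : 'I_N -> 'I_N -> R) (p : 'I_N -> R) :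
  (forall i k, a i k - a k i = 2 * (p i - p k)) ->
  \sum_i \sum_k Q i k * a i k = 2^-1 * \sum_i e i * a i i - \sum_k e k * p k.
Proof.
move=> a_skew; rewrite sum_skew_symmetrize.
have -> : \sum_i \sum_k Q i k * (a i k - a k i)
          = 2 * (\sum_i \sum_k Q i k * p i - \sum_i \sum_k Q i k * p k).
  rewrite -sumrB mulr_sumr; apply: eq_bigr => i _.
  rewrite -sumrB mulr_sumr; apply: eq_bigr => k _.
  by rewrite a_skew; ring.
rewrite [X in _ - X]exchange_big /=.
under [X in 2 * (X - _)]eq_bigr do rewrite -mulr_suml Q_row0 mul0r.
under [X in 2 * (_ - X)]eq_bigr do rewrite -mulr_suml sum_col_skew.
by rewrite big1_eq sub0r; field.
Qed.

End SBPSums.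

Lemma diag_sbp_entry (R : comPzRingType) N (M D : 'M[R]_N) (e : 'I_N -> R) :
  is_diag_mx M -> M *m D + D^T *m M = diag_mx (\row_k e k) ->
  forall i k, M i i * D i k + M k k * D k i = e i *+ (i == k).
Proof.
move=> /diag_mxP [dM ->]; rewrite mul_diag_mx mul_mx_diag => sbp i k.
have := congr1 (fun A : 'M[R]_N => A i k) sbp.
by rewrite !mxE !eqxx !mulr1n [D k i * _]mulrC => <-.
Qed.

Lemma row_sum_eq0 (R : pzSemiRingType) N (D : 'M[R]_N) :
  D *m (const_mx 1 : 'cV[R]_N) = 0 -> forall i, \sum_k D i k = 0.
Proof.
move=> D1 i; transitivity ((D *m (const_mx 1 : 'cV[R]_N)) i 0); last by rewrite D1 mxE.
by rewrite mxE; apply: eq_bigr => k _; rewrite mxE mulr1.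
Qed.

Section FluxPair.
Variables (R : realFieldType) (n m : nat) (Y : 'cV[R]_n -> Prop).
Variables (omega f : 'cV[R]_n -> 'cV[R]_n) (F : 'cV[R]_n -> R).
Variables (H : 'cV[R]_n -> 'M[R]_(n, m)) (g : 'cV[R]_n -> 'cV[R]_m) (alpha : R).
Variables (fl : 'cV[R]_n -> 'cV[R]_n -> 'cV[R]_n).
Variables (Hl : 'cV[R]_n -> 'cV[R]_n -> 'M[R]_(n, m)).

(* [VOL_i] sums [D_ik *: volume_flux u_i u_k] and [SURF_i] sums
   [e_i *: surface_flux u_i u^+_i], over the directions. *)
Definition volume_flux x y : 'cV[R]_n :=
  2 *: fl x y + alpha *: (Hl x y *m (g y - g x)) + (1 - alpha) *: (H x *m (g y - g x)).

Definition surface_flux x y : 'cV[R]_n :=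
  fl x y - f x + (alpha / 2) *: (Hl x y *m (g y - g x))
  + ((1 - alpha) / 2) *: (H x *m (g y - g x)).

Lemma row_avg_mulmx x y (v : 'cV[R]_m) :
  (avg (fun w => (omega w)^T *m H w) x y *m v) 0 0
  = 2^-1 * (dot (omega x) (H x *m v) + dot (omega y) (H y *m v)).
Proof. by rewrite /avg -scalemxAl mulmxDl [LHS]mxE [X in _ * X]mxE !dot_mulmx. Qed.

Lemma row_jump_mulmx x y (v : 'cV[R]_m) :
  (jump (fun w => (omega w)^T *m H w) x y *m v) 0 0
  = dot (omega y) (H y *m v) - dot (omega x) (H x *m v).
Proof. by rewrite /jump mulmxBl [LHS]mxE [X in _ + X]mxE !dot_mulmx. Qed.

Lemma Fnum_consistent x : fl x x = f x -> Fnum omega f F H g alpha fl Hl x x = F x.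
Proof.
move=> fl_cons; rewrite /Fnum /avg /jump fl_cons !subrr !mulmx0 dot0r mxE.
by rewrite dotZl dotDl; field.
Qed.

Hypothesis entropy : flux_condition Y omega f F H g alpha fl Hl.

Lemma volume_flux_skew x y : Y x -> Y y ->
  (forall a b, Y a -> Y b -> fl a b = fl b a) ->
  (forall a b, Y a -> Y b -> Hl a b = Hl b a) ->
  dot (omega x) (volume_flux x y) - dot (omega y) (volume_flux y x)
  = 2 * (psi omega f F x - psi omega f F y).
Proof.
move=> Yx Yy fl_sym Hl_sym; have := entropy Yx Yy.
rewrite /volume_flux /jump /avg row_avg_mulmx fl_sym // Hl_sym //.
rewrite -[g x - g y]opprB !mulmxN !dotDr !dotZr !dotNr dotZl !dotDl !dotNl => ec.
lra.
Qed.

Lemma volume_flux_diag x : volume_flux x x = 2 *: fl x x.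
Proof. by rewrite /volume_flux subrr !mulmx0 !scaler0 !addr0. Qed.

Lemma surface_flux_entropy x y : Y x -> Y y ->
  F x + dot (omega x) (surface_flux x y) = Fnum omega f F H g alpha fl Hl x y.
Proof.
move=> Yx Yy; have := entropy Yx Yy.
rewrite /Fnum /surface_flux /jump /avg /psi row_avg_mulmx row_jump_mulmx.
rewrite !dotZl !dotDl !dotNl !dotDr !dotNr !dotZr => ec.
lra.
Qed.

End FluxPair.

Section VolumeEntropy.
Variables (R : realFieldType) (n m N : nat) (D M : 'M[R]_N) (e : 'I_N -> R).
Variables (Y : 'cV[R]_n -> Prop) (omega f : 'cV[R]_n -> 'cV[R]_n) (F : 'cV[R]_n -> R).
Variables (H : 'cV[R]_n -> 'M[R]_(n, m)) (g : 'cV[R]_n -> 'cV[R]_m) (alpha : R).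
Variables (fl : 'cV[R]_n -> 'cV[R]_n -> 'cV[R]_n).
Variables (Hl : 'cV[R]_n -> 'cV[R]_n -> 'M[R]_(n, m)) (u : 'I_N -> 'cV[R]_n).
Hypothesis D1 : D *m (const_mx 1 : 'cV[R]_N) = 0.
Hypothesis M_diag : is_diag_mx M.
Hypothesis sbp : M *m D + D^T *m M = diag_mx (\row_k e k).
Hypothesis fl_sym : forall a b, Y a -> Y b -> fl a b = fl b a.
Hypothesis Hl_sym : forall a b, Y a -> Y b -> Hl a b = Hl b a.
Hypothesis fl_cons : forall a, Y a -> fl a a = f a.
Hypothesis entropy : flux_condition Y omega f F H g alpha fl Hl.
Hypothesis Yu : forall i, Y (u i).

Lemma sbp_volume_entropy :
  \sum_i \sum_k M i i * D i k * dot (omega (u i)) (volume_flux H g alpha fl Hl (u i) (u k))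
  = \sum_k e k * F (u k).
Proof.
have Q_skew := diag_sbp_entry M_diag sbp.
have Q_row0 i : \sum_k M i i * D i k = 0 by rewrite -mulr_sumr row_sum_eq0 ?mulr0.
have a_skew i k := volume_flux_skew entropy (Yu i) (Yu k) fl_sym Hl_sym.
rewrite (sbp_sum_potential Q_skew Q_row0 a_skew) mulr_sumr -sumrB.
apply: eq_bigr => k _.
by rewrite volume_flux_diag fl_cons // dotZr /psi; field.
Qed.

End VolumeEntropy.

Section ElementEntropy.
Variables (R : realFieldType) (n m N d : nat).
Variables (D : 'I_d -> 'M[R]_N) (M : 'M[R]_N) (e : 'I_d -> 'I_N -> R).
Variables (Y : 'cV[R]_n -> Prop) (omega : 'cV[R]_n -> 'cV[R]_n).
Variables (f : 'I_d -> 'cV[R]_n -> 'cV[R]_n) (F : 'I_d -> 'cV[R]_n -> R).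
Variables (H : 'I_d -> 'cV[R]_n -> 'M[R]_(n, m)) (g : 'I_d -> 'cV[R]_n -> 'cV[R]_m).
Variables (alpha : R) (fvol fnum : 'I_d -> 'cV[R]_n -> 'cV[R]_n -> 'cV[R]_n).
Variables (Hvol Hnum : 'I_d -> 'cV[R]_n -> 'cV[R]_n -> 'M[R]_(n, m)).
Variables (u : 'I_N -> 'cV[R]_n) (uplus : 'I_N -> 'I_d -> 'cV[R]_n).
Hypothesis D1 : forall j, D j *m (const_mx 1 : 'cV[R]_N) = 0.
Hypothesis M_diag : is_diag_mx M.
Hypothesis M_pos : forall i, 0 < M i i.
Hypothesis sbp : forall j, M *m D j + (D j)^T *m M = diag_mx (\row_k e j k).
Hypothesis fvol_sym : forall j a b, Y a -> Y b -> fvol j a b = fvol j b a.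
Hypothesis Hvol_sym : forall j a b, Y a -> Y b -> Hvol j a b = Hvol j b a.
Hypothesis fvol_cons : forall j a, Y a -> fvol j a a = f j a.
Hypothesis vol_entropy :
  forall j, flux_condition Y omega (f j) (F j) (H j) (g j) alpha (fvol j) (Hvol j).
Hypothesis num_entropy :
  forall j, flux_condition Y omega (f j) (F j) (H j) (g j) alpha (fnum j) (Hnum j).
Hypothesis Yu : forall i, Y (u i).
Hypothesis Yuplus : forall i j, Y (uplus i j).

Lemma entropy_VOL :
  \sum_i M i i * dot (omega (u i)) (VOL D alpha H g fvol Hvol u i)
  = \sum_k \sum_j e j k * F j (u k).
Proof.
have VOL_split i : M i i * dot (omega (u i)) (VOL D alpha H g fvol Hvol u i)
  = \sum_j \sum_k M i i * D j i k
      * dot (omega (u i)) (volume_flux (H j) (g j) alpha (fvol j) (Hvol j) (u i) (u k)).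
  rewrite /VOL dot_sumr mulr_sumr; apply: eq_bigr => j _.
  rewrite dot_sumr mulr_sumr; apply: eq_bigr => k _.
  by rewrite /volume_flux !dotDr !dotZr; ring.
rewrite (eq_bigr _ (fun i _ => VOL_split i)) exchange_big [RHS]exchange_big /=.
apply: eq_bigr => j _.
exact: sbp_volume_entropy (D1 j) M_diag (sbp j) (fvol_sym j) (Hvol_sym j)
         (fvol_cons j) (vol_entropy j) Yu.
Qed.

Lemma entropy_SURF i :
  M i i * dot (omega (u i)) (SURF M e alpha f H g fnum Hnum u uplus i)
  = \sum_j e j i * (Fnum omega (f j) (F j) (H j) (g j) alpha (fnum j) (Hnum j)
                      (u i) (uplus i j) - F j (u i)).
Proof.
rewrite /SURF dotZr mulrA mulfV ?gt_eqF // mul1r dot_sumr.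
apply: eq_bigr => j _.
rewrite dotZr -(surface_flux_entropy (num_entropy j) (Yu i) (Yuplus i j)).
by rewrite [_ - F j (u i)]addrC addKr.
Qed.

End ElementEntropy.

Theorem mainTheorem17 (R : realFieldType) (n m N d : nat)
  (D : 'I_d -> 'M[R]_N) (M : 'M[R]_N) (e : 'I_d -> 'I_N -> R)
  (Y : 'cV[R]_n -> Prop) (omega : 'cV[R]_n -> 'cV[R]_n)
  (f : 'I_d -> 'cV[R]_n -> 'cV[R]_n) (F : 'I_d -> 'cV[R]_n -> R)
  (H : 'I_d -> 'cV[R]_n -> 'M[R]_(n, m)) (g : 'I_d -> 'cV[R]_n -> 'cV[R]_m)
  (alpha : R)
  (fvol fnum : 'I_d -> 'cV[R]_n -> 'cV[R]_n -> 'cV[R]_n)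
  (Hvol Hnum : 'I_d -> 'cV[R]_n -> 'cV[R]_n -> 'M[R]_(n, m))
  (u : 'I_N -> 'cV[R]_n) (uplus : 'I_N -> 'I_d -> 'cV[R]_n)
  (hD1 : forall j, D j *m (const_mx 1 : 'cV[R]_N) = 0)
  (hMdiag : is_diag_mx M) (hMpos : forall i, 0 < M i i)
  (hSBP : forall j, M *m D j + (D j)^T *m M = diag_mx (\row_k e j k))
  (hfvol_sym : forall j a b, Y a -> Y b -> fvol j a b = fvol j b a)
  (hHvol_sym : forall j a b, Y a -> Y b -> Hvol j a b = Hvol j b a)
  (hfvol_cons : forall j a, Y a -> fvol j a a = f j a)
  (hHvol_cons : forall j a, Y a -> Hvol j a a = H j a)
  (hfnum_cons : forall j a, Y a -> fnum j a a = f j a)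
  (hHnum_cons : forall j a, Y a -> Hnum j a a = H j a)
  (hvol_ec : forall j, flux_condition Y omega (f j) (F j) (H j) (g j) alpha (fvol j) (Hvol j))
  (hnum_ec : forall j, flux_condition Y omega (f j) (F j) (H j) (g j) alpha (fnum j) (Hnum j))
  (hu : forall i, Y (u i)) (huplus : forall i j, Y (uplus i j)) :
  let dudt i := - VOL D alpha H g fvol Hvol u i - SURF M e alpha f H g fnum Hnum u uplus i in
  (\sum_(i < N) M i i * dot (omega (u i)) (dudt i)
   = - \sum_(k < N) \sum_(j < d)
         e j k * Fnum omega (f j) (F j) (H j) (g j) alpha (fnum j) (Hnum j) (u k) (uplus k j))
  /\ (forall j a, Y a -> Fnum omega (f j) (F j) (H j) (g j) alpha (fnum j) (Hnum j) a a = F j a).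
Proof.
move=> dudt; split=> [|j a Ya]; last exact: Fnum_consistent (hfnum_cons j a Ya).
transitivity (- \sum_i M i i * dot (omega (u i)) (VOL D alpha H g fvol Hvol u i)
              - \sum_i M i i * dot (omega (u i)) (SURF M e alpha f H g fnum Hnum u uplus i)).
  by rewrite -sumrN -sumrB; apply: eq_bigr => i _; rewrite /dudt dotBr dotNr; ring.
rewrite (entropy_VOL hD1 hMdiag hSBP hfvol_sym hHvol_sym hfvol_cons hvol_ec hu).
rewrite (eq_bigr _ (fun i _ => entropy_SURF e hMpos hnum_ec hu huplus i)).
rewrite -opprD -big_split /=; congr (- _); apply: eq_bigr => k _.
by rewrite -big_split; apply: eq_bigr => j _ /=; ring.
Qed.
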